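(* Let $N\in\mathbb{N}$ and $|\mu\rangle\in(\mathbb{R}^4)^{\otimes N}$ with $\mu_{1\cdots1}=1$ (equivalently, $\Pi^{(N)}_\mu$ is unital and trace-preserving). If $\Pi^{(N)}_\mu$ is entanglement breaking, then $\sum_{i_1,\dots,i_N}|\mu_{i_1\cdots i_N}|\le 2^N$.
   Context: Pauli matrices $\sigma_1=I_2$, $\sigma_2=\begin{pmatrix}0&1\\1&0\end{pmatrix}$, $\sigma_3=\begin{pmatrix}1&0\\0&-1\end{pmatrix}$, $\sigma_4=\begin{pmatrix}0&-i\\i&0\end{pmatrix}$; $\Pi^{(N)}_\mu(X)=\sum_{i_1,\dots,i_N}\frac{\mu_{i_1\cdots i_N}}{2^N}\mathrm{Tr}[(\sigma_{i_1}\otimes\cdots\otimes\sigma_{i_N})X]\sigma_{i_1}\otimes\cdots\otimes\sigma_{i_N}$ on $\mathcal{M}_2^{\otimes N}$. A linear map $L:\mathcal{M}_{d_1}\to\mathcal{M}_{d_2}$ is entanglement breaking if its Choi matrix $C_L=(\mathrm{id}_{d_1}\otimes L)(|\Omega\rangle\langle\Omega|)$, $|\Omega\rangle=\sum_{i=1}^{d_1}|i\rangle\otimes|i\rangle$, is separable, i.e. a finite sum $\sum_k A_k\otimes B_k$ with $A_k,B_k$ positive semidefinite. *)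

From HB Require Import structures.
From mathcomp Require Import all_boot all_order all_algebra.
From mathcomp Require Import complex mxtens.
Set Implicit Arguments. Unset Strict Implicit. Unset Printing Implicit Defensive.
Import Order.TTheory GRing.Theory Num.Theory.
Local Open Scope ring_scope.

Section Pauli.
Variable R : rcfType.
Local Notation C := (R[i]).

(* Pauli matrices sigma_1..sigma_4, indexed by 'I_4 = {0,1,2,3}
   (index a corresponds to sigma_{a+1}). *)
Definition pauli (a : 'I_4) : 'M[C]_2 :=
  \matrix_(r < 2, c < 2)
    match nat_of_ord a, nat_of_ord r, nat_of_ord c with
    | 0, r, c => if r == c then 1 else 0
    | 1, r, c => if r == c then 0 else 1
    | 2, 0, 0 => 1 | 2, 1, 1 => -1 | 2, _, _ => 0
    | _, 0, 1 => - 'i | _, 1, 0 => 'i | _, _, _ => 0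
    end.

(* M_2^{(x)N} is identified with 'M_(2^N) via the Kronecker convention:
   the k-th tensor factor (k = 0 first) corresponds to the binary digit of
   weight 2^(N-1-k) of the row/column index. *)
Definition qbit (N : nat) (r : 'I_(2 ^ N)) (k : 'I_N) : 'I_2 :=
  inord ((r %/ 2 ^ (N - k.+1)) %% 2).

Definition pauliN (N : nat) (f : {ffun 'I_N -> 'I_4}) : 'M[C]_(2 ^ N) :=
  \matrix_(r, c) \prod_(k < N) pauli (f k) (qbit r k) (qbit c k).

Definition PiMap (N : nat) (mu : {ffun 'I_N -> 'I_4} -> R)
    (X : 'M[C]_(2 ^ N)) : 'M[C]_(2 ^ N) :=
  \sum_(f : {ffun 'I_N -> 'I_4})
     (real_complex R (mu f) / (2 ^ N)%:R * \tr (pauliN f *m X)) *: pauliN f.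

Definition adjmx m n (A : 'M[C]_(m, n)) : 'M[C]_(n, m) := (map_mx Num.conj A)^T.

Definition psd n (A : 'M[C]_n) : Prop :=
  adjmx A = A /\ forall v : 'cV[C]_n, 0 <= (adjmx v *m A *m v) 0 0.

(* Choi matrix (id (x) L)(|Omega><Omega|) = sum_{i,j} |i><j| (x) L(|i><j|) *)
Definition choi d1 d2 (L : 'M[C]_d1 -> 'M[C]_d2) : 'M[C]_(d1 * d2) :=
  \sum_(i < d1) \sum_(j < d1) (delta_mx i j *t L (delta_mx i j)).

Definition separable d1 d2 (M : 'M[C]_(d1 * d2)) : Prop :=
  exists s : seq ('M[C]_d1 * 'M[C]_d2),
    (forall p, p \in s -> psd p.1 /\ psd p.2) /\
    M = \sum_(p <- s) (p.1 *t p.2).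

Definition entanglement_breaking d1 d2 (L : 'M[C]_d1 -> 'M[C]_d2) : Prop :=
  separable (choi L).

End Pauli.

From HB Require Import structures.
From mathcomp Require Import all_boot all_order all_algebra.
From mathcomp Require Import complex mxtens ring.
Import Order.TTheory GRing.Theory Num.Theory.
Local Open Scope ring_scope.

(* Write d = 2^N, let sigma_g be the Pauli strings and, for a matrix A, let
   <sigma_g, A> = sum_{r,c} A_rc conj (sigma_g)_rc be its Hilbert-Schmidt
   coefficients.  With completeness (Parseval) and
     Cauchy-Schwarz this gives, for A, B >= 0,
        sum_g |<sigma_g, A^T>| |<sigma_g, B>| <= d tr A tr B.
   - The linear functional Phi_g on M_d (x) M_d below satisfies
     Phi_g (A (x) B) = <sigma_g, A^T> <sigma_g, B>, and, by orthogonality,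
     Phi_g (choi Pi_mu) = d mu_g.
   Evaluating Phi_g on a separable decomposition of choi Pi_mu and summing
   over g gives d sum_g |mu_g| <= d sum_s tr A_s tr B_s = d Phi_0 (choi Pi_mu)
   = d^2 mu_0 = d^2. *)

Lemma binary_digits_inj (m r c : nat) : (r < 2 ^ m)%N -> (c < 2 ^ m)%N ->
  (forall j, (j < m)%N -> (r %/ 2 ^ j) %% 2 = (c %/ 2 ^ j) %% 2)%N -> r = c.
Proof.
elim: m r c => [|m IH] r c; first by rewrite expn0 !ltnS !leqn0 => /eqP-> /eqP->.
move=> hr hc hdigits; rewrite (divn_eq r 2) (divn_eq c 2).
have := hdigits 0%N isT; rewrite !expn0 !divn1 => ->; congr (_ * _ + _)%N.
apply: IH; rewrite ?ltn_divLR -?expnSr // => j hj.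
by have := hdigits j.+1 hj; rewrite !expnS !divnMA.
Qed.

Section Qubits.
Variable N : nat.

Definition qubits (r : 'I_(2 ^ N)) : {ffun 'I_N -> 'I_2} := [ffun k => qbit r k].

Lemma qubits_inj : injective qubits.
Proof.
move=> r c /ffunP hrc; apply: val_inj; apply: (@binary_digits_inj N); rewrite ?ltn_ord // => j hj.
have hk : (N - j.+1 < N)%N by rewrite ltn_subLR // addSn ltnS leq_addl.
have := hrc (Ordinal hk); rewrite !ffunE /qbit => /(congr1 val) /=.
by rewrite !inordK ?ltn_mod //= subnSK // subKn // ltnW.
Qed.

Lemma sum_qubits (V : nmodType) (F : {ffun 'I_N -> 'I_2} -> V) :
  \sum_(b : {ffun 'I_N -> 'I_2}) F b = \sum_(r < 2 ^ N) F (qubits r).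
Proof.
rewrite (reindex qubits) //; apply: onW_bij; apply: inj_card_bij qubits_inj _.
by rewrite card_ffun !card_ord.
Qed.

End Qubits.

Section PauliRelations.
Variable R : rcfType.
Local Notation C := (R[i]).

Lemma mul_i_conj_i : 'i * ('i : C)^* = 1.
Proof. by rewrite conjCi mulrN -expr2 sqrCi opprK. Qed.

Lemma conj_opp_i : (- 'i : C)^* = 'i.
Proof. by rewrite -{2}(conjCK ('i : C)) conjCi. Qed.

Ltac pauli_entries :=
  rewrite !big_ord_recr !big_ord0 /= !mxE /=;
  rewrite ?conj_opp_i ?rmorphN ?conjCi ?rmorph0 ?rmorph1 ?opprK ?mul_i_conj_i
          ?mulr1 ?mul1r ?mulr0 ?mul0r ?addr0 ?add0r ?mulrN ?mulNr;
  rewrite -?expr2 ?expr1n ?sqrCi ?opprK ?subrr ?addNr //.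

Lemma pauli_orth (a b : 'I_4) :
  \sum_(x < 2) \sum_(y < 2) pauli R a x y * (pauli R b x y)^* =
  (if a == b then 2 else 0).
Proof.
by case: a => [[|[|[|[|a]]]] ha] //; case: b => [[|[|[|[|b]]]] hb] //; pauli_entries.
Qed.

Lemma pauli_compl (x y x' y' : 'I_2) :
  \sum_(a < 4) pauli R a x y * (pauli R a x' y')^* =
  (if (x == x') && (y == y') then 2 else 0).
Proof.
by case: x => [[|[|x]] hx] //; case: y => [[|[|y]] hy] //;
   case: x' => [[|[|x']] hx'] //; case: y' => [[|[|y']] hy'] //; pauli_entries.
Qed.

(* Tensoring multiplies the normalisation constant 2 of the 2x2 relations. *)
Lemma prod_const2 (n : nat) : \prod_(k < n) (2 : C) = (2 ^ n)%:R.
Proof. by rewrite prodr_const card_ord natrX. Qed.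

Lemma pauliN_orth N (f g : {ffun 'I_N -> 'I_4}) :
  \sum_(p : 'I_(2 ^ N) * 'I_(2 ^ N)) pauliN R f p.1 p.2 * (pauliN R g p.1 p.2)^* =
  (if f == g then (2 ^ N)%:R else 0).
Proof.
rewrite -(pair_bigA _ (fun r c => pauliN R f r c * (pauliN R g r c)^*)) /=.
transitivity (\prod_(k < N) \sum_(x < 2) \sum_(y < 2)
    pauli R (f k) x y * (pauli R (g k) x y)^*).
  rewrite bigA_distr_bigA sum_qubits; apply: eq_bigr => r _.
  rewrite bigA_distr_bigA sum_qubits; apply: eq_bigr => c _.
  by rewrite !mxE rmorph_prod -big_split; apply: eq_bigr => k _; rewrite !ffunE.
under eq_bigr do rewrite pauli_orth.
have [<-|hfg] := eqVneq f g.
  by under eq_bigr do rewrite eqxx; rewrite prod_const2.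
have [k hk] : exists k, f k != g k.
  by apply/existsP; apply: contraR hfg => /existsPn hfg; apply/eqP/ffunP => k; apply/eqP/negPn.
by rewrite (bigD1 k) //= (negPf hk) mul0r.
Qed.

Lemma pauliN_compl N (r c r' c' : 'I_(2 ^ N)) :
  \sum_(g : {ffun 'I_N -> 'I_4}) pauliN R g r c * (pauliN R g r' c')^* =
  (if (r == r') && (c == c') then (2 ^ N)%:R else 0).
Proof.
transitivity (\prod_(k < N) \sum_(a < 4)
   pauli R a (qbit r k) (qbit c k) * (pauli R a (qbit r' k) (qbit c' k))^*).
  by rewrite bigA_distr_bigA; apply: eq_bigr => g _; rewrite !mxE rmorph_prod -big_split.
under eq_bigr do rewrite pauli_compl.
have [/forallP hqb|] := boolP [forall k, (qbit r k == qbit r' k) && (qbit c k == qbit c' k)].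
  have -> : r = r' by apply/qubits_inj/ffunP => k; rewrite !ffunE; case/andP: (hqb k) => /eqP.
  have -> : c = c' by apply/qubits_inj/ffunP => k; rewrite !ffunE; case/andP: (hqb k) => _ /eqP.
  by rewrite !eqxx; under eq_bigr do rewrite !eqxx; rewrite prod_const2.
rewrite negb_forall => /existsP [k hk]; rewrite (bigD1 k) //= (negPf hk) mul0r.
by have [er|//] := eqVneq r r'; have [ec|//] := eqVneq c c'; rewrite er ec !eqxx in hk.
Qed.

Lemma pauli0 : pauli R ord0 = 1%:M.
Proof. by apply/matrixP => x y; rewrite !mxE /=; case: ifP => hxy; rewrite -val_eqE /= hxy. Qed.

Lemma pauliN0 N : pauliN R [ffun => ord0] = 1%:M :> 'M[C]_(2 ^ N).
Proof.
apply/matrixP => r c; rewrite !mxE; under eq_bigr do rewrite ffunE pauli0 mxE.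
have [<-|hrc] := eqVneq r c; first by rewrite big1 // => k _; rewrite eqxx.
have [k hk] : exists k, qbit r k != qbit c k.
  apply/existsP; apply: contraR hrc => /existsPn hqb.
  by apply/eqP/qubits_inj/ffunP => k; rewrite !ffunE; apply/eqP/negPn.
by rewrite (bigD1 k) //= (negPf hk) mul0r.
Qed.

End PauliRelations.

(* Cauchy-Schwarz for nonnegative families, from the pairwise mean inequality
   2 (x_g y_h) (x_h y_g) <= (x_g y_h)^2 + (x_h y_g)^2. *)
Lemma cauchy_schwarz_nonneg (F : numDomainType) (I : finType) (x y : I -> F) :
  (forall g, 0 <= x g) -> (forall g, 0 <= y g) ->
  (\sum_g x g * y g) ^+ 2 <= (\sum_g x g ^+ 2) * (\sum_g y g ^+ 2).
Proof.
move=> hx hy; rewrite -[_ <= _]orFb -(lerMn2r 2) expr2 !big_distrlr /= -!sumrMnl.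
apply: le_trans (_ : \sum_g \sum_h ((x g * y h) ^+ 2 + (x h * y g) ^+ 2) <= _).
  apply: ler_sum => g _; rewrite -sumrMnl; apply: ler_sum => h _.
  have -> : x g * y g * (x h * y h) = (x g * y h) * (x h * y g) by ring.
  by apply: (real_leif_mean_square_scaled _ _).1; rewrite ger0_real // mulr_ge0.
rewrite le_eqVlt; apply/orP; left; apply/eqP.
rewrite (eq_bigr (fun g => \sum_h (x g * y h) ^+ 2 + \sum_h (x h * y g) ^+ 2)).
  rewrite big_split /= [X in _ + X]exchange_big -big_split /=.
  by apply: eq_bigr => g _; rewrite mulr2n; congr (_ + _); apply: eq_bigr => h _; rewrite exprMn.
by move=> g _; rewrite big_split.
Qed.

Lemma quadratic_nonneg_bound (F : numFieldType) (p q r : F) :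
  0 <= p -> 0 <= q -> 0 <= r ->
  (forall t, 0 <= t -> 0 <= t ^+ 2 * p - 2 * t * q + q * r) -> q <= p * r.
Proof.
move=> hp hq hr hquad; have [->|q_neq0] := eqVneq q 0; first exact: mulr_ge0.
have q_gt0 : 0 < q by rewrite lt_def q_neq0.
have [p0|p_neq0] := eqVneq p 0.
  have := hquad (r + 1) (addr_ge0 hr ler01).
  have -> : (r + 1) ^+ 2 * p - 2 * (r + 1) * q + q * r = - (q * (r + 2)) by rewrite p0; ring.
  have r2_gt0 : 0 < r + 2 by rewrite ltr_wpDl.
  by rewrite oppr_ge0 => hle; have := lt_le_trans (mulr_gt0 q_gt0 r2_gt0) hle; rewrite ltxx.
have p_gt0 : 0 < p by rewrite lt_def p_neq0.
have := hquad (q / p) (divr_ge0 (ltW q_gt0) hp).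
have -> : (q / p) ^+ 2 * p - 2 * (q / p) * q + q * r = q * (r - q / p) by field.
by rewrite pmulr_rge0 // subr_ge0 ler_pdivrMr // mulrC.
Qed.

Section PositiveSemidefinite.
Context {R : rcfType} {n : nat}.
Local Notation C := (R[i]).
Implicit Types (A : 'M[C]_n) (i j : 'I_n).
Local Notation basis_vec i := (delta_mx i 0 : 'cV[C]_n).

Lemma adjmxD (u v : 'cV[C]_n) : adjmx (u + v) = adjmx u + adjmx v.
Proof. by rewrite /adjmx map_mxD linearD. Qed.

Lemma adjmxZ (a : C) (v : 'cV[C]_n) : adjmx (a *: v) = a^* *: adjmx v.
Proof. by rewrite /adjmx map_mxZ linearZ. Qed.

Lemma form_delta A i j : adjmx (basis_vec i) *m A *m (basis_vec j) = (A i j)%:M.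
Proof.
apply/matrixP => a b; rewrite !ord1 /adjmx map_delta_mx trmx_delta -rowE -colE.
by rewrite !mxE eqxx.
Qed.

Lemma form_pair A i j (s t : C) :
  let v := s *: (basis_vec i) + t *: (basis_vec j) in
  (adjmx v *m A *m v) 0 0 =
  s^* * s * A i i + s^* * t * A i j + t^* * s * A j i + t^* * t * A j j.
Proof.
rewrite /= adjmxD !adjmxZ !(mulmxDl, mulmxDr) -!(scalemxAl, scalemxAr).
by rewrite !form_delta !mxE /=; ring.
Qed.

Lemma psd_herm A i j : psd A -> A j i = (A i j)^*.
Proof. by case=> hA _; rewrite -{1}hA !mxE. Qed.

Lemma psd_diag_ge0 A i : psd A -> 0 <= A i i.
Proof. by case=> _ /(_ (basis_vec i)); rewrite form_delta mxE eqxx mulr1n. Qed.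

(* The 2x2 principal minors of a positive semidefinite matrix are nonnegative:
   evaluate the form on t e_i - A_ji e_j for t >= 0. *)
Lemma psd_entry A i j : psd A -> `|A i j| ^+ 2 <= A i i * A j j.
Proof.
move=> hA; apply: quadratic_nonneg_bound; rewrite ?psd_diag_ge0 ?exprn_ge0 // => t ht.
have := hA.2 (t *: basis_vec i + (- A j i) *: basis_vec j).
rewrite form_pair (psd_herm _ i j hA) (geC0_conj ht) normCK !rmorphN /= conjCK.
by congr (0 <= _); ring.
Qed.

Lemma psd_tr_ge0 A : psd A -> 0 <= \tr A.
Proof. by move=> hA; apply: sumr_ge0 => i _; exact: psd_diag_ge0. Qed.

Lemma psd_frobenius A : psd A -> \sum_(p : 'I_n * 'I_n) `|A p.1 p.2| ^+ 2 <= \tr A ^+ 2.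
Proof.
move=> hA; rewrite /mxtrace expr2 big_distrlr pair_bigA /=.
by apply: ler_sum => p _; exact: psd_entry.
Qed.
End PositiveSemidefinite.

Lemma choiE (R : rcfType) d1 d2 (L : 'M[R[i]]_d1 -> 'M[R[i]]_d2) i j k l :
  choi L (mxtens_index (i, k)) (mxtens_index (j, l)) = L (delta_mx i j) k l.
Proof.
rewrite /choi summxE (bigD1 i) //= [X in _ + X]big1 => [|i' hi']; rewrite summxE.
  rewrite addr0 (bigD1 j) //= [X in _ + X]big1 => [|j' hj']; rewrite tensmxE mxE.
    by rewrite !eqxx mul1r addr0.
  by rewrite eqxx eq_sym (negPf hj') mul0r.
by rewrite big1 // => j' _; rewrite tensmxE mxE eq_sym (negPf hi') mul0r.
Qed.

Lemma mxtrace_mul_delta (F : comPzRingType) n (A : 'M[F]_n) i j :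
  \tr (A *m delta_mx i j) = A j i.
Proof.
rewrite /mxtrace (bigD1 j) //= [X in _ + X]big1 => [|x hx]; rewrite mxE.
  rewrite addr0 (bigD1 i) //= [X in _ + X]big1 => [|y hy]; rewrite mxE ?eqxx ?mulr1 ?addr0 //.
  by rewrite (negPf hy) mulr0.
by rewrite big1 // => y _; rewrite mxE (negPf hx) andbF mulr0.
Qed.

Lemma frobenius_tr (F : numDomainType) n (A : 'M[F]_n) :
  \sum_(p : 'I_n * 'I_n) `|A^T p.1 p.2| ^+ 2 = \sum_(p : 'I_n * 'I_n) `|A p.1 p.2| ^+ 2.
Proof.
rewrite -(pair_bigA _ (fun i j => `|A^T i j| ^+ 2)) -(pair_bigA _ (fun i j => `|A i j| ^+ 2)).
by rewrite exchange_big; apply: eq_bigr => i _; apply: eq_bigr => j _; rewrite mxE.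
Qed.

Section PauliCoefficients.
Variable R : rcfType.
Local Notation C := (R[i]).
Variable N : nat.
Local Notation d := (2 ^ N)%N.
Local Notation index2 := ('I_d * 'I_d)%type.
Local Notation pstring := {ffun 'I_N -> 'I_4}.

Definition pauli_coef (A : 'M[C]_d) (g : pstring) : C :=
  \sum_(p : index2) A p.1 p.2 * (pauliN R g p.1 p.2)^*.

Lemma pauli_coef0 (A : 'M[C]_d) : pauli_coef A [ffun => ord0] = \tr A.
Proof.
rewrite /pauli_coef pauliN0 -(pair_bigA _ (fun r c => A r c * (1%:M r c)^*)) /=.
apply: eq_bigr => r _; rewrite (bigD1 r) //= big1 => [|c hc].
  by rewrite !mxE eqxx rmorph1 mulr1 addr0.
by rewrite !mxE eq_sym (negPf hc) rmorph0 mulr0.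
Qed.

(* Parseval's identity for the Pauli basis, a consequence of completeness. *)
Lemma pauli_parseval (A : 'M[C]_d) :
  \sum_g `|pauli_coef A g| ^+ 2 = d%:R * \sum_(p : index2) `|A p.1 p.2| ^+ 2.
Proof.
have expand g : `|pauli_coef A g| ^+ 2 = \sum_(p : index2) \sum_(q : index2)
    A p.1 p.2 * (A q.1 q.2)^* * (pauliN R g q.1 q.2 * (pauliN R g p.1 p.2)^*).
  rewrite normCK /pauli_coef rmorph_sum big_distrlr /=.
  by apply: eq_bigr => p _; apply: eq_bigr => q _; rewrite rmorphM /= conjCK; ring.
rewrite (eq_bigr _ (fun g _ => expand g)) exchange_big big_distrr /=.
apply: eq_bigr => p _; rewrite exchange_big /= (bigD1 p) //= [X in _ + X]big1 => [|q hq].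
  by rewrite -big_distrr /= pauliN_compl !eqxx normCK addr0 mulrC.
rewrite -big_distrr /= pauliN_compl.
by have -> : (q.1 == p.1) && (q.2 == p.2) = (q == p) by []; rewrite (negPf hq) mulr0.
Qed.

Definition pauli_functional (g : pstring) (M : 'M[C]_(d * d)) : C :=
  \sum_(p : index2) \sum_(q : index2)
    M (mxtens_index (p.2, q.1)) (mxtens_index (p.1, q.2)) *
    ((pauliN R g p.1 p.2)^* * (pauliN R g q.1 q.2)^*).

Lemma pauli_functional_tens g (A B : 'M[C]_d) :
  pauli_functional g (A *t B) = pauli_coef A^T g * pauli_coef B g.
Proof.
rewrite /pauli_functional /pauli_coef big_distrlr /=.
by apply: eq_bigr => p _; apply: eq_bigr => q _; rewrite tensmxE [A^T _ _]mxE; ring.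
Qed.

Lemma pauli_functional_sum g (T : Type) (s : seq T) (F : T -> 'M[C]_(d * d)) :
  pauli_functional g (\sum_(x <- s) F x) = \sum_(x <- s) pauli_functional g (F x).
Proof.
apply: (big_morph (pauli_functional g)) => [M1 M2|]; rewrite /pauli_functional.
  rewrite -big_split; apply: eq_bigr => p _; rewrite -big_split; apply: eq_bigr => q _.
  by rewrite mxE mulrDl.
by rewrite big1 // => p _; rewrite big1 // => q _; rewrite mxE mul0r.
Qed.

(* By orthogonality of the Pauli strings, Phi_g extracts mu_g from the Choi
   matrix of Pi_mu. *)
Lemma pauli_functional_choi (mu : pstring -> R) g :
  pauli_functional g (choi (PiMap mu)) = d%:R * real_complex R (mu g).
Proof.
have entry p q : choi (PiMap mu) (mxtens_index (p.2, q.1)) (mxtens_index (p.1, q.2)) =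
    \sum_f real_complex R (mu f) / d%:R * pauliN R f p.1 p.2 * pauliN R f q.1 q.2.
  by rewrite choiE summxE; apply: eq_bigr => f _; rewrite mxE mxtrace_mul_delta.
have expand : pauli_functional g (choi (PiMap mu)) =
    \sum_f \sum_(p : index2) \sum_(q : index2) real_complex R (mu f) / d%:R *
      ((pauliN R f p.1 p.2 * (pauliN R g p.1 p.2)^*) *
       (pauliN R f q.1 q.2 * (pauliN R g q.1 q.2)^*)).
  rewrite exchange_big; apply: eq_bigr => p _; rewrite exchange_big; apply: eq_bigr => q _.
  by rewrite entry big_distrl; apply: eq_bigr => f _ /=; ring.
have factor f : \sum_(p : index2) \sum_(q : index2) real_complex R (mu f) / d%:R *
      ((pauliN R f p.1 p.2 * (pauliN R g p.1 p.2)^*) *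
       (pauliN R f q.1 q.2 * (pauliN R g q.1 q.2)^*)) =
    real_complex R (mu f) / d%:R *
      ((\sum_(p : index2) pauliN R f p.1 p.2 * (pauliN R g p.1 p.2)^*) *
       (\sum_(q : index2) pauliN R f q.1 q.2 * (pauliN R g q.1 q.2)^*)).
  by rewrite big_distrlr big_distrr; apply: eq_bigr => p _; rewrite big_distrr.
rewrite expand (eq_bigr _ (fun f _ => factor f)).
rewrite (bigD1 g) //= [X in _ + X]big1 => [|f hf]; last first.
  by rewrite !pauliN_orth (negPf hf) !mul0r mulr0.
have d_neq0 : d%:R != 0 :> C by rewrite pnatr_eq0 expn_eq0.
by rewrite !pauliN_orth eqxx addr0; field.
Qed.

(* Cauchy-Schwarz and Parseval bound the Pauli coefficients of a pair of
   positive semidefinite matrices by their traces. *)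
Lemma pauli_coef_product_bound (A B : 'M[C]_d) : psd A -> psd B ->
  \sum_g `|pauli_coef A^T g| * `|pauli_coef B g| <= d%:R * (\tr A * \tr B).
Proof.
move=> hA hB; have trA := psd_tr_ge0 A hA; have trB := psd_tr_ge0 B hB.
have lhs_ge0 : 0 <= \sum_g `|pauli_coef A^T g| * `|pauli_coef B g|.
  by apply: sumr_ge0 => g _; rewrite mulr_ge0.
rewrite -(ler_pXn2r (_ : 0 < 2)%N) ?nnegrE ?mulr_ge0 //.
pose x g := `|pauli_coef A^T g|; pose y g := `|pauli_coef B g|.
apply: le_trans (@cauchy_schwarz_nonneg _ _ x y (fun g => normr_ge0 _) (fun g => normr_ge0 _)) _.
rewrite !pauli_parseval frobenius_tr.
have -> : (d%:R * (\tr A * \tr B)) ^+ 2 =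
  (d%:R * \tr A ^+ 2) * (d%:R * \tr B ^+ 2) :> C by ring.
by rewrite ler_pM ?mulr_ge0 ?sumr_ge0 ?ler_wpM2l ?psd_frobenius // => p _; rewrite exprn_ge0.
Qed.

Lemma separable_pauli_bound (M : 'M[C]_(d * d)) : separable M ->
  \sum_g `|pauli_functional g M| <= d%:R * pauli_functional [ffun => ord0] M.
Proof.
case=> s [hs ->]; apply: le_trans (_ : \sum_g \sum_(AB <- s)
    `|pauli_coef AB.1^T g| * `|pauli_coef AB.2 g| <= _).
  apply: ler_sum => g _; rewrite pauli_functional_sum.
  apply: le_trans (ler_norm_sum _ _ _) _.
  by apply: ler_sum => AB _; rewrite pauli_functional_tens normrM.
rewrite exchange_big pauli_functional_sum big_distrr /= !big_seq.
apply: ler_sum => AB /hs [psdA psdB].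
by rewrite pauli_functional_tens !pauli_coef0 mxtrace_tr pauli_coef_product_bound.
Qed.

End PauliCoefficients.

Lemma norm_real_complex (R : rcfType) (x : R) :
  `|real_complex R x| = real_complex R `|x|.
Proof. by rewrite normc_def /= expr0n addr0 sqrtr_sqr. Qed.

Theorem mainTheorem4 (R : rcfType) (N : nat) (mu : {ffun 'I_N -> 'I_4} -> R) :
  mu [ffun => ord0] = 1 ->
  entanglement_breaking (PiMap mu) ->
  \sum_(f : {ffun 'I_N -> 'I_4}) `|mu f| <= (2 ^ N)%:R.
Proof.
move=> mu0 /separable_pauli_bound; rewrite pauli_functional_choi mu0 -lecR.
have d_gt0 : 0 < (2 ^ N)%:R :> R[i] by rewrite ltr0n expn_gt0.
under eq_bigr do rewrite pauli_functional_choi normrM normr_nat norm_real_complex.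
by rewrite -big_distrr /= mulr1 rmorph_sum rmorph_nat ler_pM2l.
Qed.
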